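(* For every $l\in\mathbb N$ there exists an update sequence of width $l$ on the real line such that any probabilistic monotone embedding of this sequence into HSTs has distortion $\Omega(l)$, even if the entire sequence is known in advance.
   Context: For $\mu \ge 1$, a $\mu$-HST is a metric space whose points are the leaves of a rooted tree $T$; every node $v$ has weight $\varphi(v)\ge 0$, $\varphi(v)=0$ iff $v$ is a leaf, $\varphi(v)\le\varphi(u)/\mu$ when $v$ is a child of $u$; the distance of leaves $u,v$ is $\varphi(\mathrm{lca}(u,v))$. An update sequence on $(X,d_X)$ is a sequence of pairs $(v_t,o_t)\in X\times\{+,-\}$ ($v_t$ arrives if $o_t=+$, leaves if $o_t=-$) with alive sets $L_0=\varnothing$, $L_t=L_{t-1}\cup\{v_t\}$ or $L_{t-1}\setminus\{v_t\}$ accordingly; its width is $\max_t|L_t|$. A (deterministic) monotone embedding of the sequence into HSTs is a sequence of metrics $d_t$ on $L_t$, each an HST, with $d_t(u,v)\ge d_X(u,v)$ for $u,v\in L_t$ and $d_t(u,v)\le d_{t-1}(u,v)$ for $u,v\in L_{t-1}\cap L_t$; a probabilistic one is a probability distribution over these. Its distortion is the least $\lambda$ with $\mathbb E[d_t(u,v)]\le\lambda d_X(u,v)$ for all $t$ and $u,v\in L_t$. *)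

From Stdlib Require Import Rdefinitions.
From HB Require Import structures.
From mathcomp Require Import all_boot all_order all_algebra.
From mathcomp Require Import finmap.
From mathcomp Require Import all_classical all_reals all_analysis.
From mathcomp Require Import Rstruct.

Set Implicit Arguments.
Unset Strict Implicit.
Unset Printing Implicit Defensive.

Import Order.TTheory GRing.Theory Num.Theory.
Local Open Scope ring_scope.

(* An update is a pair (v, o); o = true means '+' (arrival), false means '-'. *)
Definition update := (R * bool)%type.

Definition alive (s : seq update) (t : nat) : {fset R} :=
  foldl (fun (L : {fset R}) (p : update) =>
           if p.2 then fsetU [fset p.1]%fset L else fsetD L [fset p.1]%fset)
        fset0 (take t s).

Definition width (s : seq update) : nat :=
  \max_(t < (size s).+1) size (enum_fset (alive s t)).

Inductive hst_tree : Type :=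
| HLeaf of R
| HNode of R & seq hst_tree.

Definition weight (T : hst_tree) : R :=
  match T with HLeaf _ => 0 | HNode w _ => w end.

Fixpoint leaves (T : hst_tree) : seq R :=
  match T with
  | HLeaf x => [:: x]
  | HNode _ cs =>
      (fix go (cs : seq hst_tree) : seq R :=
         match cs with [::] => [::] | c :: cs' => leaves c ++ go cs' end) cs
  end.

Fixpoint valid_hst (mu : R) (T : hst_tree) : Prop :=
  match T with
  | HLeaf _ => True
  | HNode w cs =>
      0 < w /\ cs <> [::] /\
      (fix go (cs : seq hst_tree) : Prop :=
         match cs with
         | [::] => True
         | c :: cs' => (weight c <= w / mu /\ valid_hst mu c) /\ go cs'
         end) cs
  end.

Fixpoint hst_dist (T : hst_tree) (u v : R) : R :=
  match T with
  | HLeaf _ => 0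
  | HNode w cs =>
      (fix go (cs : seq hst_tree) : R :=
         match cs with
         | [::] => w
         | c :: cs' =>
             if (u \in leaves c) && (v \in leaves c) then hst_dist c u v
             else go cs'
         end) cs
  end.

Definition is_mu_hst (mu : R) (L : {fset R}) (d : R -> R -> R) : Prop :=
  L = fset0 \/
  exists T : hst_tree,
    [/\ valid_hst mu T, uniq (leaves T),
        (forall x, (x \in leaves T) = (x \in L)) &
        forall u v, u \in L -> v \in L -> d u v = hst_dist T u v].

Definition is_hst (L : {fset R}) (d : R -> R -> R) : Prop :=
  exists mu : R, 1 <= mu /\ is_mu_hst mu L d.

Definition monotone_hst_embedding (s : seq update) (d : nat -> R -> R -> R) : Prop :=
  (forall t, (t <= size s)%N -> is_hst (alive s t) (d t)) /\
  (forall t u v, (t <= size s)%N -> u \in alive s t -> v \in alive s t ->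
     `|u - v| <= d t u v) /\
  (forall t u v, (1 <= t <= size s)%N ->
     u \in alive s t.-1 -> v \in alive s t.-1 ->
     u \in alive s t -> v \in alive s t ->
     d t u v <= d t.-1 u v).

Definition prob_monotone_hst_embedding (s : seq update)
  (dsp : measure_display) (Omega : measurableType dsp)
  (P : probability Omega R) (d : Omega -> nat -> R -> R -> R) : Prop :=
  (forall w, monotone_hst_embedding s (d w)) /\
  (forall t u v, @measurable_fun _ _ Omega (measurableTypeR R) setT (fun w => d w t u v)).

Definition distortion_at_most (s : seq update)
  (dsp : measure_display) (Omega : measurableType dsp)
  (P : probability Omega R) (d : Omega -> nat -> R -> R -> R) (lambda : R) : Prop :=
  1 <= lambda /\
  forall t u v, (t <= size s)%N -> u \in alive s t -> v \in alive s t ->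
    (\int[P]_w (d w t u v)%:E <= (lambda * `|u - v|)%:E)%E.

From Stdlib Require Import Rdefinitions.
From HB Require Import structures.
From mathcomp Require Import all_boot all_order all_algebra.
From mathcomp Require Import finmap.
From mathcomp Require Import all_classical all_reals all_analysis.
From mathcomp Require Import Rstruct.
From mathcomp Require Import zify lra.
Import Order.TTheory GRing.Theory Num.Theory.
Local Open Scope fset_scope.
Local Open Scope ring_scope.
Set Implicit Arguments.
Unset Strict Implicit.

(** The adversary inserts 0 and 2^M and then bisects [0, 2^M] recursively:
    to bisect [a, a + 2^(k+1)] it inserts the midpoint m, bisects [a, m] and
    [m, a + 2^(k+1)], and deletes m; at most M + 2 points are alive at any time.
    Just before m is deleted, a, m and a + 2^(k+1) are alive in an HST, so by
    the ultrametric inequality one of the two halves has distance at least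
    2^(k+1); monotonicity carries this bound back in time into that half, and
    by induction down to a pair (x, x + 1) inside it.  So every block of every
    level owns a far unit pair, and truncating the unit-pair distances at the
    block length shows by induction that in every realization they sum to at
    least M 2^M / 2.  The expectation of that sum is at most lambda 2^M, hence
    lambda >= M / 2. *)

(** * HST metrics are ultrametrics *)

Fixpoint hst_tree_nested_ind (P : hst_tree -> Prop)
    (HL : forall x, P (HLeaf x))
    (HN : forall w cs, (forall c, List.In c cs -> P c) -> P (HNode w cs))
    (T : hst_tree) : P T :=
  match T with
  | HLeaf x => HL x
  | HNode w cs => HN w cs
      ((fix go (cs : seq hst_tree) : forall c, List.In c cs -> P c :=
          match cs with
          | [::] => fun c (H : List.In c [::]) => False_ind _ H
          | c' :: cs' => fun c H =>
              match H with
              | or_introl E => eq_ind c' P (hst_tree_nested_ind HL HN c') c E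
              | or_intror H' => go cs' c H'
              end
          end) cs)
  end.

Lemma leaves_node_cons w c cs :
  leaves (HNode w (c :: cs)) = leaves c ++ leaves (HNode w cs).
Proof. by []. Qed.

Lemma hst_dist_node_nil w u v : hst_dist (HNode w [::]) u v = w.
Proof. by []. Qed.

Lemma hst_dist_node_cons w c cs u v :
  hst_dist (HNode w (c :: cs)) u v =
  if (u \in leaves c) && (v \in leaves c) then hst_dist c u v
  else hst_dist (HNode w cs) u v.
Proof. by []. Qed.

Lemma mem_leaves_node w cs x :
  reflect (exists2 c, List.In c cs & x \in leaves c) (x \in leaves (HNode w cs)).
Proof.
elim: cs => [|c cs IH]; first by apply: ReflectF => -[].
rewrite leaves_node_cons mem_cat; apply: (iffP orP) => [[xc|/IH[c' ? ?]]|[c' [<-|?] xc']].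
- by exists c; [left|].
- by exists c'; [right|].
- by left.
- by right; apply/IH; exists c'.
Qed.

Lemma uniq_leaves_child w cs c :
  uniq (leaves (HNode w cs)) -> List.In c cs -> uniq (leaves c).
Proof.
elim: cs => [//|c' cs IH]; rewrite leaves_node_cons cat_uniq => /and3P[? _ ?].
by case=> [<-//|]; apply: IH.
Qed.

Lemma hst_dist_node_default w cs u v :
  (forall c, List.In c cs -> ~~ ((u \in leaves c) && (v \in leaves c))) ->
  hst_dist (HNode w cs) u v = w.
Proof.
elim: cs => [//|c cs IH] Hcs.
rewrite hst_dist_node_cons (negbTE (Hcs c (or_introl erefl))) IH // => c' c'in.
by apply: Hcs; right.
Qed.

Lemma hst_dist_node_child w cs c u v :
  uniq (leaves (HNode w cs)) -> List.In c cs -> u \in leaves c ->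
  hst_dist (HNode w cs) u v = if v \in leaves c then hst_dist c u v else w.
Proof.
elim: cs => [//|c' cs IH]; rewrite leaves_node_cons cat_uniq => /and3P[_ disj U].
have u_notin c'' : List.In c'' cs -> u \in leaves c'' -> u \notin leaves c'.
  by move=> c''in uc''; apply: (hasPn disj); apply/mem_leaves_node; exists c''.
case=> [<-|cin] uc; last by rewrite hst_dist_node_cons (negbTE (u_notin c cin uc)) IH.
rewrite hst_dist_node_cons uc /=; case: ifP => // _.
apply: hst_dist_node_default => c'' c''in.
by apply/negP => /andP[/(u_notin _ c''in)]; rewrite uc.
Qed.

Section HSTUltrametric.

Variable mu : R.
Hypothesis mu_ge1 : 1 <= mu.

Lemma valid_hst_child w cs c : valid_hst mu (HNode w cs) -> List.In c cs ->
  weight c <= w /\ valid_hst mu c.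
Proof.
case=> w_gt0 [_ Hcs]; have w_le : w / mu <= w.
  by rewrite ler_pdivrMr ?(lt_le_trans ltr01) // ler_peMr // ltW.
elim: cs Hcs => [//|c' cs IH] /= [[wc' vc'] Hcs] [<-|]; last exact: IH.
by split=> //; apply: le_trans w_le.
Qed.

Lemma hst_dist_le_weight T u v : valid_hst mu T -> hst_dist T u v <= weight T.
Proof.
elim/hst_tree_nested_ind: T => [//|w cs IH] vT; rewrite [weight _]/=.
have {}IH c : List.In c cs -> hst_dist c u v <= w.
  by move=> cin; have [wc vc] := valid_hst_child vT cin; exact: le_trans (IH c cin vc) wc.
elim: cs IH {vT} => [|c cs IHcs] IH; first by rewrite hst_dist_node_nil.
rewrite hst_dist_node_cons; case: ifP => _; first by apply: IH; left.
by apply: IHcs => c' c'in; apply: IH; right.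
Qed.

Lemma hst_dist_ultra T u v x : valid_hst mu T -> uniq (leaves T) ->
  u \in leaves T -> v \in leaves T -> x \in leaves T ->
  hst_dist T u x <= Num.max (hst_dist T u v) (hst_dist T v x).
Proof.
elim/hst_tree_nested_ind: T u v x => [y u v x _ _|w cs IH u v x vT U uT vT' xT].
  by rewrite /= maxxx.
have /mem_leaves_node[c cin uc] := uT.
have [wc vc] := valid_hst_child vT cin.
rewrite !(hst_dist_node_child _ U cin uc).
have [vc'|vc'] := boolP (v \in leaves c).
  rewrite (hst_dist_node_child _ U cin vc'); case: ifP => xc.
    exact: IH c cin u v x vc (uniq_leaves_child U cin) uc vc' xc.
  by rewrite le_max lexx orbT.
rewrite le_max; case: ifP => _; last by rewrite lexx.
by rewrite (le_trans (hst_dist_le_weight _ _ vc) wc).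
Qed.

End HSTUltrametric.

Lemma is_hst_ultra (L : {fset R}) (d : R -> R -> R) u v x : is_hst L d ->
  u \in L -> v \in L -> x \in L -> d u x <= Num.max (d u v) (d v x).
Proof.
case=> mu [mu_ge1 [->|[T [vT U leavesT dT]]]]; first by rewrite inE.
by move=> uL vL xL; rewrite !dT //; apply: (hst_dist_ultra mu_ge1); rewrite ?leavesT.
Qed.

Section MonotoneEmbedding.

Variables (s : seq update) (d : nat -> R -> R -> R).
Hypothesis emb : monotone_hst_embedding s d.

Lemma embedding_ultra t u v x : (t <= size s)%N ->
  u \in alive s t -> v \in alive s t -> x \in alive s t ->
  d t u x <= Num.max (d t u v) (d t v x).
Proof. by move=> ts; apply: is_hst_ultra; case: emb => + _; apply. Qed.

Lemma embedding_ge_dist t u v : (t <= size s)%N ->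
  u \in alive s t -> v \in alive s t -> `|u - v| <= d t u v.
Proof. by case: emb => _ [+ _]; apply. Qed.

Lemma embedding_nonincr u v t1 t2 : (t1 <= t2 <= size s)%N ->
  (forall t, (t1 <= t <= t2)%N -> u \in alive s t /\ v \in alive s t) ->
  d t2 u v <= d t1 u v.
Proof.
case/andP=> t12 t2s uv_alive.
apply: (@homo_leq_in _ [pred t | t1 <= t <= t2]%N (fun t => d t u v) (fun x y => y <= x))
  => //; rewrite ?inE ?t12 ?leqnn //.
- by move=> y x z xy yz; apply: le_trans xy.
- by move=> i j /andP[t1i _] /andP[_ jt2] k /andP[ik kj]; rewrite inE; lia.
- move=> i /andP[t1i _] /andP[_ it2].
  have [|ui vi] := uv_alive i; first by rewrite t1i ltnW.
  have [|ui' vi'] := uv_alive i.+1; first by rewrite it2 leqW.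
  by case: emb => _ [_]; apply => //; rewrite /= (leq_trans it2 t2s).
Qed.

End MonotoneEmbedding.

(** * The bisection update sequence *)

Definition apply_update (L : {fset R}) (p : update) : {fset R} :=
  if p.2 then p.1 |` L else L `\ p.1.

Definition run (L : {fset R}) (s : seq update) : {fset R} := foldl apply_update L s.

Lemma run_cat L s1 s2 : run L (s1 ++ s2) = run (run L s1) s2.
Proof. exact: foldl_cat. Qed.

Lemma alive_cat p r i : alive (p ++ r) (size p + i) = run (run fset0 p) (take i r).
Proof. by rewrite /alive takeD take_size_cat // drop_size_cat // -run_cat. Qed.

Definition avoids (L : {fset R}) (I : interval R) : Prop := {in L, forall x, x \notin I}.

Lemma avoids_left L a m b : m <= b -> avoids L `]a, b[ -> avoids (m |` L) `]a, m[.
Proof.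
move=> mb avL x; rewrite in_fset1U => /orP[/eqP->|xL]; first by rewrite in_itv /= ltxx andbF.
apply: contra (avL x xL); rewrite !in_itv /= => /andP[-> xm]; exact: lt_le_trans xm mb.
Qed.

Lemma avoids_right L a m b : a <= m -> avoids L `]a, b[ -> avoids (m |` L) `]m, b[.
Proof.
move=> am avL x; rewrite in_fset1U => /orP[/eqP->|xL]; first by rewrite in_itv /= ltxx.
apply: contra (avL x xL); rewrite !in_itv /= => /andP[mx ->]; rewrite andbT.
exact: le_lt_trans am mx.
Qed.

Lemma avoids_notin L a m b : m \in `]a, b[ -> avoids L `]a, b[ -> m \notin L.
Proof. by move=> mI avL; apply/negP => /avL; rewrite mI. Qed.

Lemma pow2S k : 2 ^+ k.+1 = 2 ^+ k + 2 ^+ k :> R.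
Proof. by rewrite exprS mulrDl mul1r. Qed.

Lemma pow2_gt0 k : 0 < 2 ^+ k :> R.
Proof. by rewrite exprn_gt0. Qed.

Lemma addr_pow2S (a : R) k : a + 2 ^+ k.+1 = a + 2 ^+ k + 2 ^+ k.
Proof. by rewrite pow2S addrA. Qed.

Lemma midpoint_itv (a : R) k : a + 2 ^+ k \in `]a, a + 2 ^+ k.+1[.
Proof. by rewrite in_itv /= addr_pow2S !ltrDl pow2_gt0. Qed.

Lemma dist_addr (a h : R) : 0 <= h -> `|a - (a + h)| = h.
Proof. by move=> h_ge0; rewrite opprD addNKr normrN ger0_norm. Qed.

(* Arguments of type [R] are parsed in [R_scope], where [+] is [Rplus]; the
   [%R] annotations keep the ring operations that the lemmas here rewrite. *)
Fixpoint bisection (a : R) (k : nat) : seq update :=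
  if k is k.+1 then
    (a + 2 ^+ k, true) ::
      bisection a k ++ bisection (a + 2 ^+ k)%R k ++ [:: (a + 2 ^+ k, false)]
  else [::].

Fixpoint bisection_size (k : nat) : nat :=
  if k is k.+1 then (bisection_size k + bisection_size k).+2 else 0.

Lemma size_bisection a k : size (bisection a k) = bisection_size k.
Proof. by elim: k a => [//|k IH] a /=; rewrite !size_cat /= !IH addn1 addnS. Qed.

Lemma leq_bisection_size k : (k <= bisection_size k)%N.
Proof. by elim: k => //= k; lia. Qed.

Lemma run_bisection L a k : avoids L `]a, a + 2 ^+ k[ -> run L (bisection a k) = L.
Proof.
elim: k a L => [//|k IH] a L avL.
have mI := midpoint_itv a k; have [am mb] := andP mI.
rewrite /= -/(run _ _) run_cat (IH a); last exact: avoids_left (ltW mb) avL.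
rewrite run_cat (IH (a + 2 ^+ k)); first exact: fsetU1K (avoids_notin mI avL).
by rewrite -addr_pow2S; apply: avoids_right (ltW am) avL.
Qed.

Lemma run_bisection_prefix L a k i (L' := run L (take i (bisection a k))) :
  avoids L `]a, a + 2 ^+ k[ -> (i <= bisection_size k)%N ->
  [/\ L `<=` L', (#|` L'| <= #|` L| + k)%N
    & (0 < i < bisection_size k)%N -> a + 2 ^+ k.-1 \in L'].
Proof.
rewrite {}/L'; elim: k a L i => [|k IH] a L i avL.
  by rewrite leqn0 => /eqP->; rewrite fsubset_refl addn0 ltnn andbF.
rewrite leq_eqVlt => /orP[/eqP->|].
  rewrite -(size_bisection a) take_size run_bisection //.
  by rewrite fsubset_refl leq_addr ltnn andbF.
case: i => [_|j jlt]; first by rewrite fsubset_refl leq_addr.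
set m := a + 2 ^+ k.
have mI := midpoint_itv a k; have [am mb] := andP mI.
have avl := avoids_left (ltW mb) avL.
have avr : avoids (m |` L) `]m, m + 2 ^+ k[.
  by rewrite /m -addr_pow2S; apply: avoids_right (ltW am) avL.
pose L' := run (m |` L) (take j (bisection a k ++ bisection m k ++ [:: (m, false)])).
suff [mL card_le] : m |` L `<=` L' /\ (#|` L'| <= #|` m |` L| + k)%N.
  split=> [||_]; last exact: (fsubsetP mL) _ (fset1U1 _ _).
  - exact: fsubset_trans (fsubsetU1 _ _) mL.
  - apply: leq_trans card_le _; rewrite cardfsU1 -addnA addnC addnS -addn1.
    exact: leq_add (leqnn _) (leq_b1 _).
rewrite {}/L'; have [jl|jr] := leqP j (bisection_size k).
  by rewrite takel_cat ?size_bisection //; have [] := IH a (m |` L) j avl jl.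
rewrite take_cat size_bisection ltnNge (ltnW jr) /= run_cat run_bisection //.
rewrite takel_cat ?size_bisection; last by move: jlt => /=; lia.
by have [] := IH m (m |` L) (j - bisection_size k)%N avr; first by move: jlt => /=; lia.
Qed.

Lemma card_run_bisection L a k : avoids L `]a, a + 2 ^+ k[ ->
  #|` run L (take k (bisection a k))| = (#|` L| + k)%N.
Proof.
elim: k a L => [|k IH] a L avL; first by rewrite addn0.
have mI := midpoint_itv a k; have [_ mb] := andP mI.
rewrite [take _ _]/= -/(run _ _) takel_cat ?size_bisection ?leq_bisection_size //.
rewrite IH; last exact: avoids_left (ltW mb) avL.
by rewrite [apply_update _ _]/= cardfsU1 (avoids_notin mI avL) add1n addSn addnS.
Qed.

Definition bisection_block (s : seq update) (o : nat) (a : R) (k : nat) : Prop :=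
  exists p q, [/\ s = p ++ bisection a k ++ q, size p = o,
    avoids (run fset0 p) `]a, a + 2 ^+ k[, a \in run fset0 p & a + 2 ^+ k \in run fset0 p].

Lemma bisection_block_alive s o a k i : bisection_block s o a k ->
  (i <= bisection_size k)%N ->
  [/\ (o + i <= size s)%N, a \in alive s (o + i), a + 2 ^+ k \in alive s (o + i)
    & (0 < i < bisection_size k)%N -> a + 2 ^+ k.-1 \in alive s (o + i)].
Proof.
case=> p [q [-> <- avL aL bL]] ilt.
rewrite alive_cat takel_cat ?size_bisection //.
have [/fsubsetP sub _ mid] := run_bisection_prefix avL ilt.
split; [|exact: sub|exact: sub|exact: mid].
by rewrite !size_cat size_bisection leq_add2l (leq_trans ilt) ?leq_addr.
Qed.

Lemma bisection_block_left s o a k :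
  bisection_block s o a k.+1 -> bisection_block s o.+1 a k.
Proof.
case=> p [q [-> <- avL aL bL]]; have [_ mb] := andP (midpoint_itv a k).
exists (rcons p (a + 2 ^+ k, true)), (bisection (a + 2 ^+ k)%R k ++ (a + 2 ^+ k, false) :: q).
rewrite /run foldl_rcons -/(run _ _) size_rcons cat_rcons /= -!catA.
by split=> //; [exact: avoids_left (ltW mb) avL | rewrite in_fset1U aL orbT | exact: fset1U1].
Qed.

Lemma bisection_block_right s o a k : bisection_block s o a k.+1 ->
  bisection_block s (o.+1 + bisection_size k) (a + 2 ^+ k)%R k.
Proof.
case=> p [q [-> <- avL aL bL]]; have [am mb] := andP (midpoint_itv a k).
exists (p ++ (a + 2 ^+ k, true) :: bisection a k), ((a + 2 ^+ k, false) :: q).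
rewrite size_cat /= size_bisection addnS run_cat /= -/(run _ _).
rewrite run_bisection; last exact: avoids_left (ltW mb) avL.
rewrite -addr_pow2S -!catA; split=> //; first exact: avoids_right (ltW am) avL.
  exact: fset1U1.
by rewrite in_fset1U bL orbT.
Qed.

(** * Far unit pairs *)

(* The level-0 block [(t, x)] stands for the unit pair [(x, x + 1)], alive at time [t]. *)
Fixpoint leaf_blocks (k o : nat) (a : R) : seq (nat * R) :=
  if k is k.+1 then
    leaf_blocks k o.+1 a ++ leaf_blocks k (o.+1 + bisection_size k) (a + 2 ^+ k)%R
  else [:: (o, a)].

Lemma size_leaf_blocks k o a : size (leaf_blocks k o a) = (2 ^ k)%N.
Proof. by elim: k o a => [//|k IH] o a; rewrite size_cat !IH expnS mul2n addnn. Qed.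

Lemma leaf_blocks_block s o a k p : bisection_block s o a k ->
  p \in leaf_blocks k o a -> bisection_block s p.1 p.2 0.
Proof.
elim: k o a => [|k IH] o a blk; first by rewrite inE => /eqP->.
rewrite mem_cat => /orP[]; [exact/IH/bisection_block_left | exact/IH/bisection_block_right].
Qed.

(* The last time of a block before its midpoint is deleted; [o] when [k = 0]. *)
Definition critical_time (k o : nat) : nat := (o + (bisection_size k).-1)%N.

Section LowerBound.

Variables (s : seq update) (d : nat -> R -> R -> R).
Hypothesis emb : monotone_hst_embedding s d.

Lemma leaf_dist_ge1 o a k p : bisection_block s o a k -> p \in leaf_blocks k o a ->
  1 <= d p.1 p.2 (p.2 + 1)%R.
Proof.
move=> blk /(leaf_blocks_block blk)/bisection_block_alive/(_ (leqnn 0)).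
rewrite addn0 expr0 => -[ps xL x1L _].
by have := embedding_ge_dist emb ps xL x1L; rewrite dist_addr.
Qed.

Lemma block_far_leaf o a k S : bisection_block s o a k ->
  S <= d (critical_time k o) a (a + 2 ^+ k)%R ->
  exists2 p, p \in leaf_blocks k o a & S <= d p.1 p.2 (p.2 + 1)%R.
Proof.
elim: k o a => [|k IH] o a blk.
  by rewrite expr0 /critical_time addn0 => S_le; exists (o, a); rewrite ?inE.
rewrite addr_pow2S; set m := a + 2 ^+ k; set T := critical_time k.+1 o.
have alive_amb t : (o < t <= T)%N ->
    [/\ (t <= size s)%N, a \in alive s t, m \in alive s t & m + 2 ^+ k \in alive s t].
  move=> /andP[ot tT]; have /(bisection_block_alive blk) : (t - o <= bisection_size k.+1)%N.
    by move: tT; rewrite /T /critical_time /=; lia.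
  rewrite subnKC ?(ltnW ot) // addr_pow2S => -[ts aL bL mL].
  by split=> //; apply: mL; move: tT; rewrite /T /critical_time /=; lia.
have [|Ts aT mT bT] := alive_amb T; first by rewrite leqnn andbT /T /critical_time /=; lia.
have descend o' u : (o < critical_time k o' <= T)%N -> bisection_block s o' u k ->
    (forall t, (o < t <= T)%N -> u \in alive s t /\ u + 2 ^+ k \in alive s t) ->
    S <= d T u (u + 2 ^+ k)%R ->
    exists2 p, p \in leaf_blocks k o' u & S <= d p.1 p.2 (p.2 + 1)%R.
  move=> /andP[ot' t'T] blk' uv_alive S_le; apply: IH blk' (le_trans S_le _).
  apply: (embedding_nonincr emb); first by rewrite t'T.
  by move=> t /andP[t't tT]; apply: uv_alive; rewrite tT (leq_trans ot' t't).
move/le_trans/(_ (embedding_ultra emb Ts aT mT bT)); rewrite le_max => /orP[S_le|S_le].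
- have [||p pin Sp] := descend o.+1 a _ (bisection_block_left blk) _ S_le.
  + by rewrite /T /critical_time /=; lia.
  + by move=> t /alive_amb[_ ? ? _].
  + by exists p; rewrite // mem_cat pin.
- have [||p pin Sp] := descend _ m _ (bisection_block_right blk) _ S_le.
  + by rewrite /T /critical_time /=; lia.
  + by move=> t /alive_amb[_ _ ? ?].
  + by exists p; rewrite // mem_cat pin orbT.
Qed.

Let truncated_dist (j : nat) (p : nat * R) := Num.min (d p.1 p.2 (p.2 + 1)%R) (2 ^+ j).

Lemma block_leaf_sum_ge o a k : bisection_block s o a k ->
  k%:R * 2 ^+ k <= 2 * \sum_(p <- leaf_blocks k o a) truncated_dist k p.
Proof.
elim: k o a => [|k IH] o a blk.
  rewrite mul0r big_seq1 mulr_ge0 // le_min ler01 andbT.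
  by apply: le_trans ler01 (leaf_dist_ge1 blk _); rewrite inE.
have trunc_le p : truncated_dist k p <= truncated_dist k.+1 p.
  by rewrite le_min2 // pow2S lerDl ltW ?pow2_gt0.
have [p0 p0in far] :
    exists2 p, p \in leaf_blocks k.+1 o a & 2 ^+ k.+1 <= d p.1 p.2 (p.2 + 1)%R.
  apply: (block_far_leaf blk).
  have [|ts aL bL _] := bisection_block_alive (i := (bisection_size k.+1).-1) blk.
    exact: leq_pred.
  apply: le_trans (embedding_ge_dist emb ts aL bL).
  by rewrite dist_addr // ltW ?pow2_gt0.
have bonus : 2 ^+ k <= \sum_(p <- leaf_blocks k.+1 o a)
                          (truncated_dist k.+1 p - truncated_dist k p).
  rewrite (big_rem _ p0in) /=.
  apply: le_trans (_ : _ <= truncated_dist k.+1 p0 - truncated_dist k p0) _.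
    have -> : truncated_dist k.+1 p0 = 2 ^+ k.+1 by rewrite /truncated_dist min_r.
    by rewrite pow2S lerBrDr lerD2l /truncated_dist ge_min lexx orbT.
  by rewrite lerDl sumr_ge0 // => p _; rewrite subr_ge0.
have := IH _ _ (bisection_block_left blk); have := IH _ _ (bisection_block_right blk).
have sum_cat (g : nat * R -> R) : \sum_(p <- leaf_blocks k.+1 o a) g p =
    \sum_(p <- leaf_blocks k o.+1 a) g p +
    \sum_(p <- leaf_blocks k (o.+1 + bisection_size k) (a + 2 ^+ k)%R) g p.
  exact: big_cat.
move: bonus; rewrite sumrB !sum_cat pow2S -addn1 natrD; nra.
Qed.

End LowerBound.

Lemma bisection_block_distortion_ge s o a k dsp (Omega : measurableType dsp)
    (P : probability Omega R) (d : Omega -> nat -> R -> R -> R) lambda :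
  prob_monotone_hst_embedding s P d -> distortion_at_most s P d lambda ->
  bisection_block s o a k -> k%:R / 2 <= lambda.
Proof.
move=> [emb d_meas] [_ d_le] blk; set r := leaf_blocks k o a.
(* [ge0_integral_sum] needs every summand nonnegative; on leaf pairs [F] is [d]. *)
pose F (p : nat * R) (w : Omega) : R := `|d w p.1 p.2 (p.2 + 1)%R|.
have F_meas (p : nat * R) := measurableT_comp
  (@measurable_realfun.normr_measurable R setT) (d_meas p.1 p.2 (p.2 + 1)%R).
have F_int p : p \in r -> (\int[P]_w (F p w)%:E <= lambda%:E)%E.
  move=> pin; have [ps xL x1L _] := bisection_block_alive (leaf_blocks_block blk pin) (leqnn 0).
  rewrite addn0 expr0 in ps xL x1L.
  have d_ge0 w : 0 <= d w p.1 p.2 (p.2 + 1)%R := le_trans ler01 (leaf_dist_ge1 (emb w) blk pin).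
  under eq_integral => w _ do rewrite /F ger0_norm ?d_ge0 //.
  by have := d_le _ _ _ ps xL x1L; rewrite dist_addr // mulr1.
have sum_ge w : k%:R * 2 ^+ k / 2 <= \sum_(p <- r) F p w.
  rewrite ler_pdivrMr // [_ * 2]mulrC; apply: le_trans (block_leaf_sum_ge (emb w) blk) _.
  by rewrite ler_pM2l // ler_sum // => p _; rewrite ge_min ler_norm.
have : ((k%:R * 2 ^+ k / 2)%:E <= (lambda * 2 ^+ k)%:E)%E.
  apply: le_trans (_ : _ <= \int[P]_w (\sum_(p <- r) F p w)%:E)%E _.
    rewrite -[X in (X <= _)%E]mule1 -(probability_setT P) -integral_cst //.
    apply: ge0_le_integral => //.
    - by move=> w _; rewrite lee_fin divr_ge0 // mulr_ge0 // ltW // pow2_gt0.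
    - under eq_fun do rewrite -sumEFin.
      by apply: emeasurable_sum => p; apply/measurable_realfun.measurable_EFinP; exact: F_meas.
    - by move=> w _; rewrite lee_fin sum_ge.
  under eq_integral do rewrite -sumEFin.
  rewrite ge0_integral_sum //; last 2 first.
  - by move=> p; apply/measurable_realfun.measurable_EFinP; exact: F_meas.
  - by move=> p w _; rewrite lee_fin /F normr_ge0.
  rewrite big_seq; apply: le_trans (_ : _ <= \sum_(p <- r | p \in r) lambda%:E)%E _.
    exact: lee_sum.
  rewrite -big_seq sumEFin big_const_seq count_predT size_leaf_blocks iter_addr_0.
  by rewrite -natrX mulr_natr.
by rewrite lee_fin mulrAC ler_pM2r ?pow2_gt0.
Qed.

Definition hard_prefix (M : nat) : seq update := [:: (0, true); (2 ^+ M, true)].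

Definition hard_sequence (M : nat) : seq update := hard_prefix M ++ bisection 0%R M.

Lemma avoids_hard_prefix M : avoids (run fset0 (hard_prefix M)) `]0, 0 + 2 ^+ M[.
Proof.
move=> x; rewrite /= !in_fset1U in_fset0 orbF add0r in_itv /=.
by case/orP=> /eqP->; rewrite ltxx ?andbF.
Qed.

Lemma card_hard_prefix M : #|` run fset0 (hard_prefix M)| = 2%N.
Proof. by rewrite /= !cardfsU1 in_fset0 cardfs0 in_fset1U in_fset0 orbF gt_eqF ?pow2_gt0. Qed.

Lemma hard_sequence_block M : bisection_block (hard_sequence M) 2 0%R M.
Proof.
exists (hard_prefix M), [::]; rewrite cats0 add0r; split=> //.
- by have := @avoids_hard_prefix M; rewrite add0r.
- by rewrite /= !in_fset1U eqxx orbT.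
- by rewrite /= in_fset1U eqxx.
Qed.

Lemma width_hard_sequence M : width (hard_sequence M) = M.+2.
Proof.
have size_hard : size (hard_sequence M) = (bisection_size M).+2.
  by rewrite size_cat size_bisection.
have alive_hard i : (i <= bisection_size M)%N -> alive (hard_sequence M) i.+2 =
    run (run fset0 (hard_prefix M)) (take i (bisection 0%R M)).
  by move=> ilt; rewrite -[i.+2]/(size (hard_prefix M) + i)%N alive_cat.
apply/eqP; rewrite eqn_leq; apply/andP; split.
  apply/bigmax_leqP => -[[|[|i]] ilt] _ //=.
    by rewrite /alive /= cardfsU1 in_fset0 cardfs0.
  have ilt' : (i <= bisection_size M)%N by move: ilt; rewrite size_hard.
  have [_ + _] := run_bisection_prefix (@avoids_hard_prefix M) ilt'.
  by rewrite card_hard_prefix alive_hard.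
have Mlt : (M.+2 < (size (hard_sequence M)).+1)%N by rewrite size_hard !ltnS leq_bisection_size.
apply: leq_trans (leq_bigmax (Ordinal Mlt)) => /=.
rewrite alive_hard ?leq_bisection_size // card_run_bisection; last exact: avoids_hard_prefix.
by rewrite card_hard_prefix.
Qed.

Lemma width_take1 l : (l <= 1)%N -> width (take l [:: (0, true)]) = l.
Proof.
case: l => [|[|//]] _; rewrite /width /=; first by rewrite big_ord1.
by rewrite big_ord_recl big_ord1 /alive /= cardfsU1 in_fset0 cardfs0.
Qed.

Lemma distortion_lower_bound l : exists s : seq update,
  width s = l /\
  forall (dsp : measure_display) (Omega : measurableType dsp)
         (P : probability Omega R) (d : Omega -> nat -> R -> R -> R),
    prob_monotone_hst_embedding s P d ->
    forall lambda : R, distortion_at_most s P d lambda -> (l%:R - 2) / 2 <= lambda.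
Proof.
have [l_le1|l_gt1] := leqP l 1.
  exists (take l [:: (0, true)]); split; first exact: width_take1.
  move=> dsp Omega P d _ lambda [lambda_ge1 _].
  have : l%:R <= 1 :> R by rewrite lern1.
  lra.
exists (hard_sequence (l - 2)); split; first by rewrite width_hard_sequence; lia.
move=> dsp Omega P d emb lambda dist.
by rewrite -natrB ?(bisection_block_distortion_ge emb dist (hard_sequence_block _)).
Qed.

Theorem mainTheorem5 :
  exists c : R, 0 < c /\
  forall l : nat, exists s : seq update,
    width s = l /\
    forall (dsp : measure_display) (Omega : measurableType dsp)
           (P : probability Omega R) (d : Omega -> nat -> R -> R -> R),
      prob_monotone_hst_embedding s P d ->
      forall lambda : R, distortion_at_most s P d lambda ->
        c * l%:R <= lambda.
Proof.
(* [l / 6] lies below [1/3 * (l - 2) / 2 + 2/3 * 1], a mean of the two lower bounds. *)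
exists (1 / 6); split=> [|l]; first lra.
have [s [ws lower]] := distortion_lower_bound l; exists s; split=> // dsp Omega P d emb lambda dist.
have := lower dsp Omega P d emb lambda dist; case: dist => lambda_ge1 _.
lra.
Qed.
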